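(* Let $(M,g,S)$, $p$, $u$ and the coordinates $(x',y',z',t')$ be as in the context. Then $u$, $Su$, $S^2u$, $S^3u$ are isotropic vectors with respect to $\tilde g$, and their endpoints lie on the surface in $T_pM$ given by $$x'^2+y'^2=\tfrac12,\qquad z'^2+t'^2=\tfrac12.$$
   Context: $M$ is a 4-dimensional differentiable manifold with a positive definite metric $g$ and a tensor field $S$ of type $(1,1)$ whose components in some local coordinate system form the matrix with rows $(0,1,0,0)$, $(0,0,1,0)$, $(0,0,0,1)$, $(-1,0,0,0)$; hence $S^4=-\mathrm{id}$, and $g(Su,Sv)=g(u,v)$ for all vector fields $u,v$. The associated metric is $\tilde g(u,v)=g(u,Sv)+g(Su,v)$; a nonzero vector $w$ is isotropic if $\tilde g(w,w)=0$. Let $p\in M$ and $u\in T_pM$ with $\{u,Su,S^2u,S^3u\}$ a $g$-orthonormal basis of $T_pM$. Coordinates $(x,y,z,t)$ on $T_pM$ are given by $v=xu+ySu+zS^2u+tS^3u$, and coordinates $(x',y',z',t')$ by $x=\frac12(x'-y'+z'-t')$, $y=\frac{\sqrt2}{2}(-y'+t')$, $z=-\frac12(x'+y'+z'+t')$, $t=\frac{\sqrt2}{2}(-x'+z')$. The endpoint of a vector $w\in T_pM$ is the point $w$ of $T_pM$. *)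

(* The tangent space T_pM is modelled by the coordinate
   space 'cV[R]_4 of the given local coordinate system at p. *)
From HB Require Import structures.
From mathcomp Require Import all_boot all_order all_algebra.
Set Implicit Arguments. Unset Strict Implicit. Unset Printing Implicit Defensive.
Import Order.TTheory GRing.Theory Num.Theory.
Local Open Scope ring_scope.

Definition Smx {R : nzRingType} : 'M[R]_4 :=
  \matrix_(i < 4, j < 4)
    (if (i : nat) == 3%N then (if (j : nat) == 0%N then -1 else 0)
     else if (j : nat) == i.+1 then 1 else 0).

Definition Sop {R : nzRingType} (v : 'cV[R]_4) : 'cV[R]_4 := Smx *m v.

Definition Spow {R : nzRingType} (k : nat) (v : 'cV[R]_4) : 'cV[R]_4 :=
  iter k Sop v.

Definition bil {R : nzRingType} (G : 'M[R]_4) (u v : 'cV[R]_4) : R :=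
  (u^T *m G *m v) 0 0.

Definition gtilde {R : nzRingType} (G : 'M[R]_4) (u v : 'cV[R]_4) : R :=
  bil G u (Sop v) + bil G (Sop u) v.

Definition isotropic {R : nzRingType} (G : 'M[R]_4) (w : 'cV[R]_4) : Prop :=
  w != 0 /\ gtilde G w w = 0.

Definition coords_to_vec {R : nzRingType} (u : 'cV[R]_4) (x y z t : R) :=
  x *: u + y *: Spow 1 u + z *: Spow 2 u + t *: Spow 3 u.

Definition primed_to_vec {R : rcfType} (u : 'cV[R]_4) (x' y' z' t' : R) :=
  coords_to_vec u ((x' - y' + z' - t') / 2)
                  (Num.sqrt 2 / 2 * (- y' + t'))
                  (- (x' + y' + z' + t') / 2)
                  (Num.sqrt 2 / 2 * (- x' + z')).

Definition on_surface {R : rcfType} (u w : 'cV[R]_4) : Prop :=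
  exists x' y' z' t' : R, w = primed_to_vec u x' y' z' t' /\
    x' ^+ 2 + y' ^+ 2 = 1 / 2 /\ z' ^+ 2 + t' ^+ 2 = 1 / 2.

From HB Require Import structures.
From mathcomp Require Import all_boot all_order all_algebra ring lra.
Import Order.TTheory GRing.Theory Num.Theory.
Local Open Scope ring_scope.

(* In the basis u, Su, S^2u, S^3u a vector w with coordinates (x, y, z, t)
   has g(w, w) = x^2 + y^2 + z^2 + t^2 and g(w, Sw) = xy + yz + zt - tx.  The
   change to primed coordinates is orthogonal and turns these two forms into
   x'^2 + y'^2 + z'^2 + t'^2 and (x'^2 + y'^2 - z'^2 - t'^2) / sqrt 2, so the
   surface consists of the g-unit vectors of the isotropic cone of g~; the
   vectors S^k u have coordinates e_k and lie on it.  Their isotropy comes from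
   the S-invariance of g~, which reduces it to g(u, Su) + g(Su, u) = 0. *)

Lemma on_surface_coords (R : rcfType) (u : 'cV[R]_4) (x y z t : R) :
  x ^+ 2 + y ^+ 2 + z ^+ 2 + t ^+ 2 = 1 -> x * y + y * z + z * t - t * x = 0 ->
  on_surface u (coords_to_vec u x y z t).
Proof.
move=> norm1 cross0; rewrite /on_surface /primed_to_vec.
move: (sqr_sqrtr (ler0n R 2)); move: (Num.sqrt 2) => s s2.
have s2K a : s ^+ 2 / 2 * a = a by rewrite s2 mulfV ?mul1r // pnatr_eq0.
(* the primed coordinate change is orthogonal: invert it by its transpose *)
exists ((x - z) / 2 - s / 2 * t), (- (x + z) / 2 - s / 2 * y),
       ((x - z) / 2 + s / 2 * t), (- (x + z) / 2 + s / 2 * y).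
split; last split.
- congr coords_to_vec; first [by field | by rewrite -[LHS]s2K; field].
- transitivity ((x ^+ 2 + z ^+ 2) / 2 + s ^+ 2 / 4 * (y ^+ 2 + t ^+ 2)
            + s / 2 * (x * y + y * z + z * t - t * x)); first by field.
  by rewrite s2 cross0; lra.
- transitivity ((x ^+ 2 + z ^+ 2) / 2 + s ^+ 2 / 4 * (y ^+ 2 + t ^+ 2)
            - s / 2 * (x * y + y * z + z * t - t * x)); first by field.
  by rewrite s2 cross0; lra.
Qed.

Lemma coords_to_vec_Spow (R : nzRingType) (u : 'cV[R]_4) (k : 'I_4) :
  coords_to_vec u (val k == 0)%:R (val k == 1)%:R (val k == 2)%:R (val k == 3)%:R
  = Spow k u.
Proof.
case: k => [[|[|[|[|//]]]] ?];
  by rewrite /coords_to_vec !(scale1r, scale0r, addr0, add0r).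
Qed.

Lemma on_surface_Spow (R : rcfType) (u : 'cV[R]_4) (k : 'I_4) :
  on_surface u (Spow k u).
Proof.
rewrite -coords_to_vec_Spow; apply: on_surface_coords;
  by case: k => [[|[|[|[|//]]]] ?] /=; ring.
Qed.

Section SInvariantForm.

Variables (R : nzRingType) (G : 'M[R]_4).
Hypothesis G_S : forall v w : 'cV[R]_4, bil G (Sop v) (Sop w) = bil G v w.

Lemma gtilde_Sop (v w : 'cV[R]_4) : gtilde G (Sop v) (Sop w) = gtilde G v w.
Proof. by rewrite /gtilde !G_S. Qed.

Lemma gtilde_Spow (k : nat) (v w : 'cV[R]_4) :
  gtilde G (Spow k v) (Spow k w) = gtilde G v w.
Proof. by elim: k => // k IHk; rewrite /Spow !iterS gtilde_Sop. Qed.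

End SInvariantForm.

Lemma bil0l (R : nzRingType) (G : 'M[R]_4) (w : 'cV[R]_4) : bil G 0 w = 0.
Proof. by rewrite /bil trmx0 !mul0mx mxE. Qed.

Theorem theorem3p4 (R : rcfType) (G : 'M[R]_4)
  (G_sym : G^T = G)
  (G_pos : forall v : 'cV[R]_4, v != 0 -> 0 < bil G v v)
  (G_S : forall v w : 'cV[R]_4, bil G (Sop v) (Sop w) = bil G v w)
  (u : 'cV[R]_4)
  (u_on : forall i j : 'I_4, bil G (Spow i u) (Spow j u) = (i == j)%:R) :
  forall k : 'I_4, isotropic G (Spow k u) /\ on_surface u (Spow k u).
Proof.
move=> k; split; last exact: on_surface_Spow.
split.
- apply/eqP => Sku0; have := u_on k k.
  by rewrite Sku0 bil0l eqxx => /esym/eqP; rewrite oner_eq0.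
- rewrite gtilde_Spow // /gtilde.
  by have := u_on 0 1; have := u_on 1 0; rewrite /= => -> ->; rewrite addr0.
Qed.
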